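(* Let $m_i>0$, $v_{ik}\in\mathbb R$ and $\eta_{il}\in\mathbb R$ ($i=1,\dots,n$, $l=1,\dots,p$) be given, with $\eta_{ij}$ depending on the coordinate $\varphi_{jk}$ through $\eta_{ij}=c_{ij}+v_{ik}\varphi_{jk}$ and the $\eta_{il}$, $l\ne j$, not depending on $\varphi_{jk}$. Let $q_{ij}(\varphi_{jk})=e^{\eta_{ij}}/\sum_{l=1}^pe^{\eta_{il}}$ and $h(\varphi_{jk})=\sum_{i=1}^n m_iv_{ik}^2q_{ij}(1-q_{ij})$. Fix the current value $\varphi_{jk}$ and $\delta>0$; set $E_{ij}=\sum_{l\ne j}e^{\eta_{il}}$ and $$e_{ij}=\begin{cases}e^{\eta_{ij}-|v_{ik}|\delta}&\text{if }E_{ij}<e^{\eta_{ij}-|v_{ik}|\delta},\\ e^{\eta_{ij}+|v_{ik}|\delta}&\text{if }E_{ij}>e^{\eta_{ij}+|v_{ik}|\delta},\\ E_{ij}&\text{otherwise},\end{cases}\qquad F_{ij}=\frac{e_{ij}}{E_{ij}}+\frac{E_{ij}}{e_{ij}}+2,$$ where $\eta_{ij}$ is evaluated at the current $\varphi_{jk}$. Then $H_{jk}=\sum_{i=1}^n m_iv_{ik}^2/F_{ij}$ satisfies $h(\varphi^\star)\le H_{jk}$ for every $\varphi^\star$ with $|\varphi^\star-\varphi_{jk}|\le\delta$.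
   Context: This is the trust-region curvature bound for coordinate descent on the negative multinomial logistic log likelihood $l=-\sum_i[\sum_j x_{ij}\eta_{ij}-m_i\log\sum_l e^{\eta_{il}}]$, whose second derivative in $\varphi_{jk}$ is $h$. *)

From Stdlib Require Import Reals Lra.
Open Scope R_scope.

Fixpoint rsum (n : nat) (f : nat -> R) : R :=
  match n with
  | O => 0
  | S k => rsum k f + f k
  end.

(* Linear predictors eta_{il} as a function of the coordinate phi = phi_{jk}:
   eta_{ij}(phi) = c_{ij} + v_{ik} phi, and eta_{il} (l <> j) fixed. *)
Definition etaF (c v : nat -> R) (eta : nat -> nat -> R) (j : nat) (phi : R)
  (i l : nat) : R :=
  if Nat.eqb l j then c i + v i * phi else eta i l.

Definition qF (p : nat) (c v : nat -> R) (eta : nat -> nat -> R) (j : nat)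
  (phi : R) (i : nat) : R :=
  exp (etaF c v eta j phi i j) / rsum p (fun l => exp (etaF c v eta j phi i l)).

Definition hF (n p : nat) (m c v : nat -> R) (eta : nat -> nat -> R) (j : nat)
  (phi : R) : R :=
  rsum n (fun i => m i * (v i) ^ 2 * qF p c v eta j phi i * (1 - qF p c v eta j phi i)).

Definition EF (p : nat) (c v : nat -> R) (eta : nat -> nat -> R) (j : nat)
  (phi : R) (i : nat) : R :=
  rsum p (fun l => if Nat.eqb l j then 0 else exp (etaF c v eta j phi i l)).

Definition eF (p : nat) (c v : nat -> R) (eta : nat -> nat -> R) (j : nat)
  (phi delta : R) (i : nat) : R :=
  let E := EF p c v eta j phi i in
  let lo := exp (etaF c v eta j phi i j - Rabs (v i) * delta) in
  let hi := exp (etaF c v eta j phi i j + Rabs (v i) * delta) in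
  if Rlt_dec E lo then lo else if Rlt_dec hi E then hi else E.

Definition FF (p : nat) (c v : nat -> R) (eta : nat -> nat -> R) (j : nat)
  (phi delta : R) (i : nat) : R :=
  eF p c v eta j phi delta i / EF p c v eta j phi i
  + EF p c v eta j phi i / eF p c v eta j phi delta i + 2.

Definition HF (n p : nat) (m c v : nat -> R) (eta : nat -> nat -> R) (j : nat)
  (phi delta : R) : R :=
  rsum n (fun i => m i * (v i) ^ 2 / FF p c v eta j phi delta i).

(* Writing a = e^{eta_ij} and E = E_ij (which does not depend on phi_jk),
   each summand of h is m_i v_ik^2 g(a) with g(a) = a E / (a + E)^2 = q (1 - q).
   g increases on [0, E] and decreases on [E, oo), so over the interval
   [e^{eta_ij - |v_ik| delta}, e^{eta_ij + |v_ik| delta}] swept by a when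
   |phi* - phi_jk| <= delta, it is maximal at the clipped value e_ij, and
   g(e_ij) = 1 / F_ij. *)
From Stdlib Require Import Reals Lra Lia.
Open Scope R_scope.

Lemma rsum_le (n : nat) (f g : nat -> R) :
  (forall i, (i < n)%nat -> f i <= g i) -> rsum n f <= rsum n g.
Proof.
  induction n as [|n IH]; simpl; intros Hfg; [lra|].
  assert (f n <= g n) by (apply Hfg; lia).
  assert (rsum n f <= rsum n g) by (apply IH; intros; apply Hfg; lia).
  lra.
Qed.

Lemma rsum_ext (n : nat) (f g : nat -> R) :
  (forall i, (i < n)%nat -> f i = g i) -> rsum n f = rsum n g.
Proof.
  induction n as [|n IH]; simpl; intros Hfg; [reflexivity|].
  rewrite (Hfg n), IH by (intros; try apply Hfg; lia).
  reflexivity.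
Qed.

Lemma rsum_ge0 (n : nat) (f : nat -> R) :
  (forall i, (i < n)%nat -> 0 <= f i) -> 0 <= rsum n f.
Proof.
  induction n as [|n IH]; simpl; intros Hf; [lra|].
  assert (0 <= f n) by (apply Hf; lia).
  assert (0 <= rsum n f) by (apply IH; intros; apply Hf; lia).
  lra.
Qed.

Lemma rsum_split_at (p j : nat) (f : nat -> R) : (j < p)%nat ->
  rsum p f = f j + rsum p (fun l => if Nat.eqb l j then 0 else f l).
Proof.
  induction p as [|p IH]; intros Hj; [lia|]. simpl.
  destruct (Nat.eq_dec j p) as [->|Hne].
  - rewrite Nat.eqb_refl.
    rewrite (rsum_ext p (fun l => if Nat.eqb l p then 0 else f l) f); [ring|].
    intros i Hi. destruct (Nat.eqb_spec i p); [lia|reflexivity].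
  - rewrite IH by lia. destruct (Nat.eqb_spec p j); [lia|ring].
Qed.

Definition clip (lo hi x : R) : R :=
  if Rlt_dec x lo then lo else if Rlt_dec hi x then hi else x.

Lemma clip_pos (lo hi x : R) : 0 < lo -> lo <= hi -> 0 < clip lo hi x.
Proof.
  unfold clip; destruct (Rlt_dec x lo); [|destruct (Rlt_dec hi x)]; lra.
Qed.

(* The sign of g(clip E) - g(a) for g(a) = a E / (a + E)^2. *)
Lemma clip_unimodal_sign (a E lo hi : R) :
  0 < lo -> lo <= a <= hi -> 0 <= E ->
  0 <= (a - clip lo hi E) * (a * clip lo hi E - E * E).
Proof.
  intros Hlo Ha HE. unfold clip.
  destruct (Rlt_dec E lo); [|destruct (Rlt_dec hi E)].
  - assert (0 <= a * lo - E * E) by nra. nra.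
  - assert (0 <= E * E - a * hi) by nra. nra.
  - replace ((a - E) * (a * E - E * E)) with (E * ((a - E) * (a - E))) by ring.
    apply Rmult_le_pos; [lra | apply Rle_0_sqr].
Qed.

Lemma logistic_var_le_clip (a E lo hi : R) :
  0 < lo -> lo <= a <= hi -> 0 <= E ->
  let e := clip lo hi E in
  a / (a + E) * (1 - a / (a + E)) <= 1 / (e / E + E / e + 2).
Proof.
  intros Hlo Ha HE e.
  assert (He : 0 < e) by (apply clip_pos; lra).
  assert (Hsign := clip_unimodal_sign a E lo hi Hlo Ha HE). fold e in Hsign.
  destruct (Req_dec E 0) as [->|HE0].
  - (* E_ij = 0 (only when p = 1): then q = 1, and e/0 = 0 makes F = 2. *)
    replace (a / (a + 0)) with 1 by (field; lra).
    replace (e / 0 + 0 / e + 2) with 2 by (unfold Rdiv; rewrite Rinv_0; ring).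
    lra.
  - replace (a / (a + E) * (1 - a / (a + E))) with (a * E / ((a + E) * (a + E)))
      by (field; lra).
    replace (1 / (e / E + E / e + 2)) with (e * E / ((e + E) * (e + E)))
      by (field; nra).
    assert (Hdiff : e * E / ((e + E) * (e + E)) - a * E / ((a + E) * (a + E))
      = E * ((a - e) * (a * e - E * E)) / (((e + E) * (e + E)) * ((a + E) * (a + E))))
      by (field; nra).
    assert (0 <= E * ((a - e) * (a * e - E * E))
                 / (((e + E) * (e + E)) * ((a + E) * (a + E)))).
    { apply Rmult_le_pos; [nra|].
      apply Rlt_le, Rinv_0_lt_compat, Rmult_lt_0_compat; nra. }
    lra.
Qed.

Section Coordinate.

Variables (p : nat) (c v : nat -> R) (eta : nat -> nat -> R) (j : nat).

Lemma EF_indep (phi psi : R) (i : nat) : EF p c v eta j psi i = EF p c v eta j phi i.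
Proof.
  apply rsum_ext. intros l _. unfold etaF. destruct (Nat.eqb l j); reflexivity.
Qed.

Lemma EF_ge0 (phi : R) (i : nat) : 0 <= EF p c v eta j phi i.
Proof.
  apply rsum_ge0. intros l _. destruct (Nat.eqb l j); [lra|].
  apply Rlt_le, exp_pos.
Qed.

Lemma qF_split (phi psi : R) (i : nat) : (j < p)%nat ->
  qF p c v eta j psi i
  = exp (c i + v i * psi) / (exp (c i + v i * psi) + EF p c v eta j phi i).
Proof.
  intros Hj. unfold qF. rewrite (rsum_split_at p j) by exact Hj.
  rewrite <- (EF_indep phi psi). unfold EF, etaF at 1 2. rewrite Nat.eqb_refl.
  reflexivity.
Qed.

Lemma exp_eta_within (phi delta psi : R) (i : nat) :
  Rabs (psi - phi) <= delta ->
  exp (etaF c v eta j phi i j - Rabs (v i) * delta) <= exp (c i + v i * psi)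
    <= exp (etaF c v eta j phi i j + Rabs (v i) * delta).
Proof.
  intros Hpsi.
  assert (Hshift : Rabs (v i * (psi - phi)) <= Rabs (v i) * delta).
  { rewrite Rabs_mult. apply Rmult_le_compat_l; [apply Rabs_pos | exact Hpsi]. }
  assert (Hlohi : - (Rabs (v i) * delta) <= v i * (psi - phi) <= Rabs (v i) * delta).
  { pose proof (Rle_abs (v i * (psi - phi))).
    pose proof (Rle_abs (- (v i * (psi - phi)))). rewrite Rabs_Ropp in *. lra. }
  assert (Hexp_le : forall x y, x <= y -> exp x <= exp y).
  { intros x y [Hxy|Hxy]; [left; apply exp_increasing | rewrite Hxy]; lra. }
  unfold etaF; rewrite Nat.eqb_refl. split; apply Hexp_le; lra.
Qed.

Lemma qF_var_le_inv_FF (phi delta psi : R) (i : nat) :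
  (j < p)%nat -> Rabs (psi - phi) <= delta ->
  qF p c v eta j psi i * (1 - qF p c v eta j psi i) <= 1 / FF p c v eta j phi delta i.
Proof.
  intros Hj Hpsi. rewrite (qF_split phi psi i Hj).
  exact (logistic_var_le_clip _ _ _ _ (exp_pos _) (exp_eta_within phi delta psi i Hpsi)
           (EF_ge0 phi i)).
Qed.

End Coordinate.

Theorem mainTheorem7 (n p : nat) (m c v : nat -> R) (eta : nat -> nat -> R)
  (j : nat) (phi delta : R)
  (Hm : forall i, (i < n)%nat -> 0 < m i)
  (Hj : (j < p)%nat)
  (Hdelta : 0 < delta) :
  forall phistar : R, Rabs (phistar - phi) <= delta ->
    hF n p m c v eta j phistar <= HF n p m c v eta j phi delta.
Proof.
  intros phistar Hphistar. apply rsum_le. intros i Hi.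
  assert (Hweight : 0 <= m i * v i ^ 2) by (pose proof (Hm i Hi); nra).
  pose proof (qF_var_le_inv_FF p c v eta j phi delta phistar i Hj Hphistar) as Hvar.
  unfold Rdiv in *. rewrite Rmult_1_l in Hvar. rewrite Rmult_assoc.
  apply Rmult_le_compat_l; assumption.
Qed.
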